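(* Let $R$ be a ring. Any finite direct sum of subinjective extension-reflecting right $R$-modules is subinjective extension-reflecting, and any finite direct sum of subprojective extension-reflecting right $R$-modules is subprojective extension-reflecting.
   Context: For modules $X,Y$, $X\in \underline{\mathfrak{In}}^{-1}(Y)$ means: for every module $C$ containing $X$ as a submodule, every homomorphism $X\to Y$ extends to $C\to Y$; $X\in \underline{\mathfrak{Pr}}^{-1}(Y)$ means: for every epimorphism $g\colon B\to X$ and every homomorphism $f\colon Y\to X$ there exists $h\colon Y\to B$ with $gh=f$. $M$ is subinjective extension-reflecting if for every short exact sequence $0\to A\to B\to C\to 0$ of right $R$-modules, $M\in \underline{\mathfrak{In}}^{-1}(A)\cap \underline{\mathfrak{In}}^{-1}(C)$ implies $M\in \underline{\mathfrak{In}}^{-1}(B)$; subprojective extension-reflecting is defined the same way with $\underline{\mathfrak{Pr}}^{-1}$. *)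

(* Right R-modules are modelled as left modules over the
   converse ring R^c (lmodType R^c); homomorphisms are {linear _ -> _}. *)
From HB Require Import structures.
From mathcomp Require Import all_boot all_order all_algebra.
Set Implicit Arguments. Unset Strict Implicit. Unset Printing Implicit Defensive.
Import GRing.Theory.
Local Open Scope ring_scope.

Section ModDefs.
Variable R : pzRingType.

Notation rmod := (lmodType R^c).

Definition InInv (X Y : rmod) : Prop :=
  forall (C : rmod) (i : {linear X -> C}), injective i ->
  forall f : {linear X -> Y}, exists g : {linear C -> Y}, forall x, g (i x) = f x.

Definition PrInv (X Y : rmod) : Prop :=
  forall (B : rmod) (g : {linear B -> X}), (forall x, exists b, g b = x) ->
  forall f : {linear Y -> X}, exists h : {linear Y -> B}, forall y, g (h y) = f y.

Definition short_exact (A B C : rmod) (f : {linear A -> B}) (g : {linear B -> C})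
  : Prop :=
  [/\ injective f, (forall c, exists b, g b = c) &
      (forall b, g b = 0 <-> exists a, f a = b)].

Definition subinj_ext_refl (M : rmod) : Prop :=
  forall (A B C : rmod) (f : {linear A -> B}) (g : {linear B -> C}),
  short_exact f g -> InInv M A -> InInv M C -> InInv M B.

Definition subproj_ext_refl (M : rmod) : Prop :=
  forall (A B C : rmod) (f : {linear A -> B}) (g : {linear B -> C}),
  short_exact f g -> PrInv M A -> PrInv M C -> PrInv M B.

Definition is_direct_sum (n : nat) (M : 'I_n -> rmod) (D : rmod) : Prop :=
  exists (inj : forall i, {linear M i -> D}) (proj : forall i, {linear D -> M i}),
  [/\ (forall i x, proj i (inj i x) = x),
      (forall i j (x : M i), i != j -> proj j (inj i x) = 0) &
      (forall d, \sum_(i < n) inj i (proj i d) = d)].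

End ModDefs.

(** For every [Y], a finite direct sum [D] of the [M_i] lies in [In^-1(Y)]
    iff every [M_i] does (and likewise for [Pr^-1]); closure of these classes
    under extensions then passes from the [M_i] to [D].

    A retract [M] of [D] (with [p ∘ s = id]) inherits membership: an embedding
    [j : M -> C] gives the embedding [d |-> (j (p d), d - s (p d))] of [D] into
    [C × D], and an epimorphism [g : B -> M] gives the epimorphism
    [(b, d) |-> s (g b) + d - s (p d)] of [B × D] onto [D].
    Conversely, for [D ⊆ C] each [M_i] embeds into the cokernel of
    [j ∘ (1 - s_i p_i)], i.e. the pushout of [C] along [p_i]; extending
    [f ∘ s_i] there and summing over [i] extends [f]. Dually, an epimorphism
    [g : B -> D] restricts to an epimorphism onto [M_i] from the kernel of
    [(1 - s_i p_i) ∘ g], where [p_i ∘ f] lifts; the lifts sum to a lift of [f]. *)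
From HB Require Import structures.
From mathcomp Require Import all_boot all_order all_algebra.
From mathcomp Require Import generic_quotient ring_quotient boolp.
Set Implicit Arguments. Unset Strict Implicit. Unset Printing Implicit Defensive.
Import GRing.Theory.
Local Open Scope ring_scope.
Local Open Scope quotient_scope.

Section LinearCombinators.
Variables (R : pzRingType) (U V W : lmodType R).

Definition lin_pair (f : {linear U -> V}) (g : {linear U -> W}) (u : U) : V * W :=
  (f u, g u).

Fact lin_pair_is_linear f g : linear (lin_pair f g).
Proof. by move=> a u w; rewrite /lin_pair !linearP. Qed.
HB.instance Definition _ f g :=
  GRing.isLinear.Build R U (V * W)%type *:%R (lin_pair f g) (lin_pair_is_linear f g).

Definition lin_sum (I : finType) (F : I -> {linear U -> V}) (u : U) : V :=
  \sum_i F i u.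

Fact lin_sum_is_linear I F : linear (@lin_sum I F).
Proof.
move=> a u w; rewrite /lin_sum scaler_sumr -big_split.
by apply: eq_bigr => i _; rewrite linearP.
Qed.
HB.instance Definition _ I F :=
  GRing.isLinear.Build R U V *:%R (@lin_sum I F) (lin_sum_is_linear F).

End LinearCombinators.

Section Cokernel.
Variables (R : pzRingType) (U V : lmodType R) (phi : {linear U -> V}).

(* Quotients need a boolean relation, so image membership is decided classically. *)
Definition lin_img : {pred V} := [pred v | `[< exists u, phi u = v >]].

Lemma lin_imgP v : reflect (exists u, phi u = v) (v \in lin_img).
Proof. exact: asboolP. Qed.

Fact lin_img_submod_closed : subsemimod_closed lin_img.
Proof.
split; first split.
- by apply/lin_imgP; exists 0; rewrite linear0.
- move=> _ _ /lin_imgP[u <-] /lin_imgP[w <-].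
  by apply/lin_imgP; exists (u + w); rewrite linearD.
- by move=> a _ /lin_imgP[u <-]; apply/lin_imgP; exists (a *: u); rewrite linearZ.
Qed.
HB.instance Definition _ :=
  GRing.isSubmodClosed.Build R V lin_img lin_img_submod_closed.

Definition coker := Quotient.quot lin_img.
HB.instance Definition _ := ZmodQuotient.copy coker (Quotient.quot lin_img).
HB.instance Definition _ := Choice.copy coker (Quotient.quot lin_img).

Definition coker_scale a := lift_op1 coker ( *:%R a).

Lemma pi_coker_scale a : {morph \pi_coker : v / a *: v >-> coker_scale a v}.
Proof.
move=> v; unlock coker_scale; apply/eqP; rewrite piE Quotient.equivE -scalerBr.
by apply: rpredZ; rewrite Quotient.idealrBE reprK.
Qed.
Canonical pi_coker_scale_morph a := PiMorph1 (pi_coker_scale a).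

Fact coker_scaleA a b v : coker_scale a (coker_scale b v) = coker_scale (a * b) v.
Proof. by rewrite -[v]reprK !piE scalerA. Qed.
Fact coker_scale1 : left_id 1 coker_scale.
Proof. by move=> v; rewrite -[v]reprK !piE scale1r. Qed.
Fact coker_scaleDr : right_distributive coker_scale +%R.
Proof. by move=> a v w; rewrite -[v]reprK -[w]reprK !piE scalerDr. Qed.
Fact coker_scaleDl v : {morph coker_scale^~ v : a b / a + b}.
Proof. by move=> a b; rewrite -[v]reprK !piE scalerDl. Qed.
HB.instance Definition _ := GRing.Zmodule_isLmodule.Build R coker
  coker_scaleA coker_scale1 coker_scaleDr coker_scaleDl.

Definition coker_proj : V -> coker := \pi.

Fact coker_proj_is_linear : linear coker_proj.
Proof. by move=> a v w; rewrite /coker_proj !piE. Qed.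
HB.instance Definition _ :=
  GRing.isLinear.Build R V coker *:%R coker_proj coker_proj_is_linear.

Lemma coker_proj_eq v w : coker_proj v = coker_proj w <-> exists u, phi u = v - w.
Proof.
rewrite /coker_proj; split => [/eqP|[u uE]].
  by rewrite -Quotient.idealrBE => /lin_imgP.
by apply/eqP; rewrite -Quotient.idealrBE; apply/lin_imgP; exists u.
Qed.

End Cokernel.

Section Kernel.
Variables (R : pzRingType) (U V : lmodType R) (k : {linear U -> V}).

Definition lin_ker : {pred U} := [pred u | k u == 0].

Fact lin_ker_submod_closed : subsemimod_closed lin_ker.
Proof.
split; first split.
- by rewrite inE linear0.
- by move=> u w; rewrite !inE linearD => /eqP-> /eqP->; rewrite addr0.
- by move=> a u; rewrite !inE linearZ_LR => /eqP->; rewrite scaler0.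
Qed.
HB.instance Definition _ :=
  GRing.isSubmodClosed.Build R U lin_ker lin_ker_submod_closed.

Inductive kernel : predArgType := Kernel u & u \in lin_ker.

Definition kernel_val w : U := let: Kernel u _ := w in u.
HB.instance Definition _ := [isSub of kernel for kernel_val].
HB.instance Definition _ := [Choice of kernel by <:].
HB.instance Definition _ := [SubChoice_isSubLmodule of kernel by <:].

Fact kernel_val_is_linear : linear kernel_val. Proof. by []. Qed.
HB.instance Definition _ :=
  GRing.isLinear.Build R kernel U *:%R kernel_val kernel_val_is_linear.

Lemma kernel_valP w : k (kernel_val w) = 0.
Proof. by apply/eqP; case: w. Qed.

End Kernel.

Arguments kernel_val {R U V} k.

Section RelativeInjectivityProjectivity.
Variable R : pzRingType.
Local Notation rmod := (lmodType R^c).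

Definition ext_reflecting (P : rmod -> rmod -> Prop) (M : rmod) : Prop :=
  forall (A B C : rmod) (f : {linear A -> B}) (g : {linear B -> C}),
  short_exact f g -> P M A -> P M C -> P M B.

Lemma ext_reflecting_summands (P : rmod -> rmod -> Prop) (I : Type)
    (M : I -> rmod) (D : rmod) :
  (forall Y, P D Y <-> forall i, P (M i) Y) ->
  (forall i, ext_reflecting P (M i)) -> ext_reflecting P D.
Proof.
move=> PD reflM A B C f g exfg /PD PDA /PD PDC; apply/PD => i.
exact: reflM i A B C f g exfg (PDA i) (PDC i).
Qed.

Section Retraction.
Variables (M D : rmod) (s : {linear M -> D}) (p : {linear D -> M}).
Hypothesis sK : cancel s p.

Lemma InInv_retract Y : InInv D Y -> InInv M Y.
Proof.
move=> InD C j j_inj f.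
pose e := lin_pair (j \o p) (idfun \- (s \o p)).
have e_inj : injective e.
  by move=> x y [/j_inj pxy]; rewrite /= pxy => /addIr.
have [g gE] := InD _ e e_inj (f \o p).
exists (g \o lin_pair idfun \0) => x.
have esx : e (s x) = (j x, 0) by rewrite /e /lin_pair /= sK subrr.
by rewrite /= /lin_pair /= -esx gE /= sK.
Qed.

Lemma PrInv_retract Y : PrInv D Y -> PrInv M Y.
Proof.
move=> PrD B g g_surj f.
pose g' := (s \o g \o fst) \+ ((idfun \- (s \o p)) \o snd).
have pg' u : p (g' u) = g u.1 by rewrite /= linearD linearB /= !sK subrr addr0.
have g'_surj d : exists u, g' u = d.
  have [b gb] := g_surj (p d).
  by exists (b, d); rewrite /g' /= gb addrC subrK.
have [h hE] := PrD _ g' g'_surj (s \o f).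
exists (fst \o h) => y.
by rewrite /= -pg'; have /(congr1 p) := hE y; rewrite /= sK.
Qed.

Lemma InInv_extend_retraction Y (C : rmod) (j : {linear D -> C}) :
  injective j -> InInv M Y ->
  forall f : {linear M -> Y}, exists g : {linear C -> Y}, forall d, g (j d) = f (p d).
Proof.
move=> j_inj InM f.
pose phi := j \o (idfun \- (s \o p)).
pose e := coker_proj phi \o j \o s.
have e_inj : injective e.
  move=> x y /coker_proj_eq[u]; rewrite /= -!linearB => /j_inj/(congr1 p).
  by rewrite !linearB /= !sK subrr => /esym/eqP; rewrite subr_eq0 => /eqP.
have [g gE] := InM _ e e_inj f.
exists (g \o coker_proj phi) => d.
have jd : coker_proj phi (j d) = e (p d).
  by apply/coker_proj_eq; exists d; rewrite /= linearB.
by rewrite /= jd; apply: gE.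
Qed.

Lemma PrInv_lift_retraction Y (B : rmod) (g : {linear B -> D}) :
  (forall d, exists b, g b = d) -> PrInv M Y ->
  forall f : {linear Y -> D}, exists h : {linear Y -> B}, forall y, g (h y) = s (p (f y)).
Proof.
move=> g_surj PrM f.
pose k : {linear B -> D} := (idfun \- (s \o p)) \o g.
pose gM := p \o g \o kernel_val k.
have gM_surj x : exists w, gM w = x.
  have [b gb] := g_surj (s x).
  have kb : b \in lin_ker k by rewrite inE /k /= gb sK subrr.
  by exists (Kernel kb); rewrite /gM /= gb sK.
have [h hE] := PrM _ gM gM_surj (p \o f).
exists (kernel_val k \o h) => y.
have /eqP := kernel_valP (h y); rewrite /= subr_eq0 => /eqP->.
by have /= -> := hE y.
Qed.

End Retraction.

Section DirectSum.
Variables (n : nat) (M : 'I_n -> rmod) (D : rmod).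
Variables (inj : forall i, {linear M i -> D}) (proj : forall i, {linear D -> M i}).
Hypothesis injK : forall i, cancel (inj i) (proj i).
Hypothesis sum_inj_proj : forall d, \sum_(i < n) inj i (proj i d) = d.

Lemma InInv_direct_sum Y : (forall i, InInv (M i) Y) -> InInv D Y.
Proof.
move=> InM C j j_inj f.
have /choice[g gE] : forall i, exists g : {linear C -> Y},
    forall d, g (j d) = f (inj i (proj i d)).
  exact: (fun i => InInv_extend_retraction (@injK i) j_inj (InM i) (f \o inj i)).
exists (lin_sum g) => d.
by rewrite -{2}[d]sum_inj_proj linear_sum; apply: eq_bigr => i _.
Qed.

Lemma PrInv_direct_sum Y : (forall i, PrInv (M i) Y) -> PrInv D Y.
Proof.
move=> PrM B g g_surj f.
have /choice[h hE] : forall i, exists h : {linear Y -> B},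
    forall y, g (h y) = inj i (proj i (f y)).
  exact: (fun i => PrInv_lift_retraction (@injK i) g_surj (PrM i) f).
exists (lin_sum h) => y.
by rewrite linear_sum -[RHS]sum_inj_proj; apply: eq_bigr => i _.
Qed.

End DirectSum.

End RelativeInjectivityProjectivity.

Theorem mainTheorem16 (R : pzRingType) :
  (forall (n : nat) (M : 'I_n -> lmodType R^c) (D : lmodType R^c),
     is_direct_sum M D -> (forall i, subinj_ext_refl (M i)) -> subinj_ext_refl D) /\
  (forall (n : nat) (M : 'I_n -> lmodType R^c) (D : lmodType R^c),
     is_direct_sum M D -> (forall i, subproj_ext_refl (M i)) -> subproj_ext_refl D).
Proof.
split=> n M D [inj [proj [injK _ sum_inj_proj]]].
- apply: (@ext_reflecting_summands _ (@InInv R)) => Y.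
  split=> [InD i|]; first exact: (InInv_retract (injK i) InD).
  exact: (InInv_direct_sum injK sum_inj_proj).
- apply: (@ext_reflecting_summands _ (@PrInv R)) => Y.
  split=> [PrD i|]; first exact: (PrInv_retract (injK i) PrD).
  exact: (PrInv_direct_sum injK sum_inj_proj).
Qed.
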